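(* Consider a pairwise spanner instance on a directed graph $G=(V,E)$ with uniform edge lengths and $k\ge 1$ terminal pairs, with optimal value $\mathsf{OPT}$. Then there exists a junction tree $J$ in $G$ with $D(J)\neq\emptyset$ and density $\rho(J)\le \mathsf{OPT}/\sqrt{k}$.
   Context: Pairwise spanner problem: given a directed graph $G=(V,E)$ with $\ell(e)=1$ for all $e$, terminal pairs $(s_i,t_i)$, $i\in[k]$, and target distances $d_i$ with $d_G(s_i,t_i)\le d_i$, find $F\subseteq E$ of minimum cardinality such that $(V,F)$ contains an $s_i\leadsto t_i$ path with at most $d_i$ edges for every $i$; $\mathsf{OPT}$ is this minimum. A junction tree rooted at $r\in V$ is a subgraph $J$ of $G$ that is the union of an in-arborescence $A^{in}$ rooted at $r$ (every vertex of it has a unique path to $r$ in it) and an out-arborescence $A^{out}$ rooted at $r$. A terminal pair $(s_i,t_i)$ is connected by $J$ if $s_i\in A^{in}$, $t_i\in A^{out}$, and the $s_i\leadsto r$ path in $A^{in}$ plus the $r\leadsto t_i$ path in $A^{out}$ have at most $d_i$ edges in total. $D(J)$ is the set of terminal pairs connected by $J$, and the density of $J$ is $\rho(J)=|E(J)|/|D(J)|$. *)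

From HB Require Import structures.
From mathcomp Require Import all_boot all_order all_algebra.
Set Implicit Arguments. Unset Strict Implicit. Unset Printing Implicit Defensive.
Import Order.TTheory GRing.Theory Num.Theory.

Section Spanner.
Variable V : finType.

(* A directed graph on vertex set V is given by its edge set E : {set V * V};
   an edge (u, v) goes from u to v; all edge lengths are 1. *)

Fixpoint reach (F : {set V * V}) (n : nat) (u v : V) : bool :=
  match n with
  | 0 => u == v
  | n'.+1 => (u == v) || [exists w, ((u, w) \in F) && reach F n' w v]
  end.

Definition erel (F : {set V * V}) : rel V := fun x y => (x, y) \in F.

Definition verts (A : {set V * V}) (r : V) : {set V} :=
  [set x | (x == r) || [exists y, ((x, y) \in A) || ((y, x) \in A)]].

Definition in_arb (A : {set V * V}) (r : V) : bool :=
  [forall u in verts A r,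
    if u == r then [forall w, (r, w) \notin A]
    else (#|[set w | (u, w) \in A]| == 1) && connect (erel A) u r].

Definition out_arb (A : {set V * V}) (r : V) : bool :=
  [forall u in verts A r,
    if u == r then [forall w, (w, r) \notin A]
    else (#|[set w | (w, u) \in A]| == 1) && connect (erel A) r u].

Record junction := Junction { jroot : V; jin : {set V * V}; jout : {set V * V} }.

Definition junction_in (E : {set V * V}) (J : junction) : bool :=
  [&& jin J \subset E, jout J \subset E,
      in_arb (jin J) (jroot J) & out_arb (jout J) (jroot J)].

Definition jedges (J : junction) : {set V * V} := jin J :|: jout J.

Section Pairs.
Variables (k : nat) (s t : 'I_k -> V) (d : 'I_k -> nat).

(* (s_i, t_i) is connected by J: s_i in A_in, t_i in A_out, and the
   s_i ~> r path in A_in plus the r ~> t_i path in A_out have at most d_i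
   edges in total (paths in arborescences are unique). *)
Definition jconnects (J : junction) (i : 'I_k) : bool :=
  [&& s i \in verts (jin J) (jroot J), t i \in verts (jout J) (jroot J) &
      [exists a : 'I_(d i).+1,
         reach (jin J) a (s i) (jroot J) && reach (jout J) (d i - a) (jroot J) (t i)]].

Definition jD (J : junction) : {set 'I_k} := [set i | jconnects J i].

Definition feasible (F : {set V * V}) : bool :=
  [forall i, reach F (d i) (s i) (t i)].

(* OPT: minimum cardinality of a feasible F subset of E
   (E itself is feasible under the standing assumption, so #|E| is a valid
   default for the min). *)
Definition OPT (E : {set V * V}) : nat :=
  \big[minn/#|E|]_(F : {set V * V} | (F \subset E) && feasible F) #|F|.

End Pairs.
End Spanner.

From HB Require Import structures.
From mathcomp Require Import all_boot all_order all_algebra.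
Import Order.TTheory GRing.Theory Num.Theory.
Set Implicit Arguments. Unset Strict Implicit. Unset Printing Implicit Defensive.

(* Fix an optimal spanner F (|F| = OPT) and, for every pair i, a walk P_i in F
   from s_i to t_i with at most d_i edges, together with the set W_i of the
   vertices it visits.  Let v0 be a vertex lying on the largest number c of
   walks, and P_i1 a walk with fewest edges.  Every edge of P_i has its tail in
   W_i, so double counting gives  k * |P_i1| <= sum_i |P_i| <= |F| * c.
   - If c^2 >= k, a shortest-path junction tree of F rooted at v0 connects all
     c pairs whose walk visits v0 and has at most |F| edges: density <= OPT/c.
   - If c^2 < k, a shortest-path junction tree of P_i1 rooted at s_i1 connects
     pair i1 and has at most |P_i1| <= OPT * c / k < OPT / sqrt k edges. *)

Section Reachability.
Variable V : finType.
Implicit Types (F G A : {set V * V}) (u v w x r : V).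

Lemma reach_refl F n u : reach F n u u.
Proof. by case: n => [|n] /=; rewrite eqxx. Qed.

Lemma reach_mono F n m u v : n <= m -> reach F n u v -> reach F m u v.
Proof.
elim: n m u => [|n IH] [|m] u //= nm; first by move=> ->.
case/orP=> [->//|/existsP[w /andP[uw h]]].
by apply/orP; right; apply/existsP; exists w; rewrite uw (IH m).
Qed.

Lemma reach_sub F G n u v : F \subset G -> reach F n u v -> reach G n u v.
Proof.
move=> sFG; elim: n u => [|n IH] u //=.
case/orP=> [->//|/existsP[w /andP[uw h]]].
by apply/orP; right; apply/existsP; exists w; rewrite (subsetP sFG _ uw) IH.
Qed.

Lemma reach_cons F n u w v : (u, w) \in F -> reach F n w v -> reach F n.+1 u v.
Proof. by move=> uw h /=; apply/orP; right; apply/existsP; exists w; rewrite uw. Qed.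

Lemma reach_snoc F n u w v : reach F n u w -> (w, v) \in F -> reach F n.+1 u v.
Proof.
elim: n u => [|n IH] u /=.
  by move/eqP=> -> wv; apply/orP; right; apply/existsP; exists v; rewrite wv eqxx.
case/orP=> [/eqP-> wv|/existsP[y /andP[uy h]] wv].
  by apply/orP; right; apply/existsP; exists v; rewrite wv /= eqxx.
by apply/orP; right; apply/existsP; exists y; rewrite uy; exact: IH h wv.
Qed.

Lemma reach_connect F n u v : reach F n u v -> connect (erel F) u v.
Proof.
elim: n u => [|n IH] u /=; first by move/eqP->.
case/orP=> [/eqP->//|/existsP[w /andP[uw h]]].
exact: connect_trans (connect1 uw) (IH _ h).
Qed.

Lemma reach_verts A n x r : reach A n x r -> x \in verts A r.
Proof.
case: n => [|n] /=; first by rewrite inE => ->.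
rewrite inE; case/orP=> [->//|/existsP[w /andP[xw _]]].
by apply/orP; right; apply/existsP; exists w; rewrite xw.
Qed.

(* Reversal of all edges, used to turn in-arborescences into out-arborescences. *)
Definition revE F : {set V * V} := [set e | (e.2, e.1) \in F].

Lemma in_revE F x y : ((x, y) \in revE F) = ((y, x) \in F).
Proof. by rewrite inE. Qed.

Lemma revEK F : revE (revE F) = F.
Proof. by apply/setP=> [[x y]]; rewrite !in_revE. Qed.

Lemma reach_rev1 F n u v : reach F n u v -> reach (revE F) n v u.
Proof.
elim: n u => [|n IH] u /=; first by rewrite eq_sym.
case/orP=> [/eqP->|/existsP[w /andP[uw h]]]; first by rewrite eqxx.
by apply: reach_snoc (IH _ h) _; rewrite in_revE.
Qed.

Lemma reach_rev F n u v : reach (revE F) n v u = reach F n u v.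
Proof.
by apply/idP/idP=> [/reach_rev1|]; [rewrite revEK | apply: reach_rev1].
Qed.

Lemma verts_rev A r : verts (revE A) r = verts A r.
Proof.
apply/setP=> x; rewrite !inE; congr (_ || _).
by apply/existsP/existsP=> -[y h]; exists y; rewrite !in_revE orbC in h *.
Qed.

Lemma reach_verts_out A n x r : reach A n r x -> x \in verts A r.
Proof. by rewrite -reach_rev -verts_rev; apply: reach_verts. Qed.

Lemma out_arb_rev A r : out_arb (revE A) r = in_arb A r.
Proof.
rewrite /out_arb /in_arb verts_rev; apply: eq_forallb => u; congr (_ ==> _).
case: ifP => _.
  by apply: eq_forallb => w; rewrite in_revE.
have -> : [set w | (w, u) \in revE A] = [set w | (u, w) \in A].
  by apply/setP=> w; rewrite !inE.
congr (_ && _); rewrite -[RHS](connect_rev (erel A) r u).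
by apply: eq_connect => x y; exact: in_revE.
Qed.

End Reachability.

(* Shortest-path in-arborescence: every vertex x that reaches r within N edges
   of H points to a neighbour one step closer to r.  The resulting tree keeps
   every bounded distance to r, which is what makes junction trees cheap. *)
Section ShortestPathInTree.
Variables (V : finType) (H : {set V * V}) (r : V) (N : nat).
Implicit Types (x u w : V).

Definition spt_near x : bool := reach H N x r.

Definition spt_dist x : nat := find (fun n => reach H n x r) (iota 0 N.+1).

Lemma spt_distP x : spt_near x ->
  [/\ spt_dist x <= N, reach H (spt_dist x) x r &
      forall n, n <= N -> reach H n x r -> spt_dist x <= n].
Proof.
move=> nx; have hs : has (fun n => reach H n x r) (iota 0 N.+1).
  by apply/hasP; exists N; rewrite ?mem_iota ?ltnSn.
have dN : spt_dist x < N.+1 by rewrite -(size_iota 0 N.+1) -has_find.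
have := nth_find 0 hs; rewrite nth_iota // add0n => hd.
split=> // n nN hn; rewrite leqNgt; apply/negP=> lt.
by have := before_find 0 lt; rewrite nth_iota ?add0n ?hn //.
Qed.

Definition spt_parent x : option V :=
  [pick w | ((x, w) \in H) && reach H (spt_dist x).-1 w r].

Definition spt : {set V * V} :=
  [set e | [&& e.1 != r, spt_near e.1 & spt_parent e.1 == Some e.2]].

Lemma in_spt x w : ((x, w) \in spt) = [&& x != r, spt_near x & spt_parent x == Some w].
Proof. by rewrite inE. Qed.

Lemma spt_parentP x : x != r -> spt_near x -> exists w,
  [/\ spt_parent x = Some w, (x, w) \in H, spt_near w & spt_dist w < spt_dist x].
Proof.
move=> xr nx; have [dN hd dmin] := spt_distP nx.
move: hd; rewrite /spt_parent; case: (spt_dist x) dN => [|m] dN /=.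
  by rewrite (negbTE xr).
rewrite (negbTE xr) /= => /existsP[w0 hw0].
case: pickP => [w /andP[xw hw]|/(_ w0)]; last by rewrite hw0.
have nw : spt_near w by apply: reach_mono hw; apply: ltnW.
exists w; split=> //; have [_ _ wmin] := spt_distP nw.
by rewrite ltnS wmin // ltnW.
Qed.

Lemma spt_sub : spt \subset H.
Proof.
apply/subsetP=> -[x w]; rewrite in_spt => /and3P[_ _ /eqP].
by rewrite /spt_parent; case: pickP => // y /andP[xy _] [<-].
Qed.

Lemma spt_reach_dist x : spt_near x -> reach spt (spt_dist x) x r.
Proof.
have [m] := ubnP (spt_dist x); elim: m x => // m IH x /ltnSE dx nx.
case: (eqVneq x r) => [->|xr]; first exact: reach_refl.
have [w [px _ nw dw]] := spt_parentP xr nx.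
rewrite -(ltn_predK dw); apply: (@reach_cons _ _ _ _ w).
  by rewrite in_spt xr nx px eqxx.
by apply: reach_mono (IH w (leq_trans dw dx) nw); rewrite -ltnS (ltn_predK dw).
Qed.

Lemma spt_verts_near u : u \in verts spt r -> u != r -> spt_near u.
Proof.
rewrite inE => /orP[/eqP->|/existsP[y]]; first by rewrite eqxx.
case/orP; rewrite in_spt => /and3P[yr ny /eqP py] //.
by have [w [pw _ nw _]] := spt_parentP yr ny; move: py; rewrite pw => -[<-].
Qed.

Lemma spt_in_arb : in_arb spt r.
Proof.
apply/forall_inP=> u uv; case: (eqVneq u r) => [_|ur].
  by apply/forallP=> w; rewrite in_spt eqxx.
have nu := spt_verts_near uv ur; have [w [pu _ _ _]] := spt_parentP ur nu.
have -> : [set w0 | (u, w0) \in spt] = [set w].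
  by apply/setP=> w0; rewrite !inE /= ur nu pu (inj_eq Some_inj) eq_sym.
by rewrite cards1 eqxx (reach_connect (spt_reach_dist nu)).
Qed.

Lemma spt_reach n x : n <= N -> reach H n x r -> reach spt n x r.
Proof.
move=> nN hx; have nx : spt_near x by apply: reach_mono hx.
have [_ _ dmin] := spt_distP nx.
exact: reach_mono (dmin n nN hx) (spt_reach_dist nx).
Qed.

End ShortestPathInTree.

Section Junctions.
Variable V : finType.
Implicit Types (F G : {set V * V}) (v : V).

Definition spt_junction F v (N : nat) : junction V :=
  Junction v (spt F v N) (revE (spt (revE F) v N)).

Lemma spt_junction_in F v N : junction_in F (spt_junction F v N).
Proof.
apply/and4P; split=> /=; [exact: spt_sub | | exact: spt_in_arb |].
  apply/subsetP=> -[x y]; rewrite in_revE => /(subsetP (spt_sub _ _ _)).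
  by rewrite in_revE.
by rewrite out_arb_rev; apply: spt_in_arb.
Qed.

Lemma spt_junction_out_reach F v N n x :
  n <= N -> reach F n v x -> reach (jout (spt_junction F v N)) n v x.
Proof. by move=> nN hx; rewrite reach_rev; apply: spt_reach nN _; rewrite reach_rev. Qed.

Lemma junction_in_sub F G (J : junction V) :
  junction_in F J -> F \subset G -> junction_in G J.
Proof.
case/and4P=> sin sout ain aout sFG.
by rewrite /junction_in ain aout (subset_trans sin) ?(subset_trans sout).
Qed.

Lemma jedges_sub F (J : junction V) : junction_in F J -> jedges J \subset F.
Proof. by case/and4P=> sin sout _ _; rewrite subUset sin. Qed.

Variables (k : nat) (s t : 'I_k -> V) (d : 'I_k -> nat).

Lemma mem_jD (J : junction V) i a : a <= d i ->
  reach (jin J) a (s i) (jroot J) -> reach (jout J) (d i - a) (jroot J) (t i) ->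
  i \in jD s t d J.
Proof.
move=> ad hin hout; rewrite inE /jconnects (reach_verts hin) (reach_verts_out hout).
have ad' : a < (d i).+1 by rewrite ltnS.
by apply/existsP; exists (Ordinal ad'); rewrite /= hin hout.
Qed.

Definition junction_at F v : junction V := spt_junction F v (\max_i d i).

Lemma junction_at_connects F v i a : a <= d i ->
  reach F a (s i) v -> reach F (d i - a) v (t i) -> i \in jD s t d (junction_at F v).
Proof.
move=> ad hin hout; have dmax : d i <= \max_j d j by apply: leq_bigmax.
apply: (mem_jD ad); first exact: spt_reach (leq_trans ad dmax) hin.
exact: spt_junction_out_reach (leq_trans (leq_subr _ _) dmax) hout.
Qed.

End Junctions.

Section WalkCovers.
Variable V : finType.
Implicit Types (F P : {set V * V}) (W : {set V}) (u v w x : V).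

Definition walk_cover F n u v P W : Prop :=
  [/\ P \subset F, reach P n u v, u \in W, forall e, e \in P -> e.1 \in W &
      forall x, x \in W -> exists2 a, a <= n & reach F a u x && reach F (n - a) x v].

Lemma walk_cover_refl F n u : walk_cover F n u u set0 [set u].
Proof.
split; rewrite ?sub0set ?reach_refl ?set11 //; first by move=> e; rewrite in_set0.
by move=> x /set1P->; exists 0; rewrite ?reach_refl.
Qed.

Lemma walk_cover_cons F n u w v P W : (u, w) \in F -> walk_cover F n w v P W ->
  walk_cover F n.+1 u v ((u, w) |: P) (u |: W).
Proof.
move=> uw [sP hP wW tW splitW]; split.
- by rewrite subUset sub1set uw sP.
- exact: reach_cons (setU11 _ _) (reach_sub (subsetUr _ _) hP).
- exact: setU11.
- by move=> e; rewrite !in_setU1 => /orP[/eqP->|/tW->]; rewrite ?eqxx ?orbT.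
- move=> x; rewrite in_setU1 => /orP[/eqP->|/splitW[a an /andP[ha hb]]].
    by exists 0; rewrite // reach_refl (reach_cons uw (reach_sub sP hP)).
  by exists a.+1; rewrite // subSS hb (reach_cons uw ha).
Qed.

Lemma walk_coverP F n u v : reach F n u v ->
  exists PW : {set V * V} * {set V}, walk_cover F n u v PW.1 PW.2.
Proof.
elim: n u => [|n IH] u /=.
  by move/eqP <-; exists (set0, [set u]); apply: walk_cover_refl.
case/orP=> [/eqP <-|/existsP[w /andP[uw /IH[[P W] cw]]]].
  by exists (set0, [set u]); apply: walk_cover_refl.
by exists ((u, w) |: P, u |: W); apply: walk_cover_cons.
Qed.

Lemma walk_covers_jD k (s t : 'I_k -> V) (d : 'I_k -> nat) F
    (P : 'I_k -> {set V * V}) (W : 'I_k -> {set V}) v :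
  (forall i, walk_cover F (d i) (s i) (t i) (P i) (W i)) ->
  [set i | v \in W i] \subset jD s t d (junction_at d F v).
Proof.
move=> cover; apply/subsetP=> i; rewrite inE => hv.
have [_ _ _ _ /(_ v hv)[a ad /andP[ha hb]]] := cover i.
exact: junction_at_connects ad ha hb.
Qed.

End WalkCovers.

Lemma sum_card_le_cover (I T U : finType) (tail : T -> U) (F : {set T})
    (P : I -> {set T}) (W : I -> {set U}) m :
  (forall i, P i \subset F) -> (forall i e, e \in P i -> tail e \in W i) ->
  (forall y, #|[set i | y \in W i]| <= m) -> \sum_i #|P i| <= #|F| * m.
Proof.
move=> sPF tW mW.
apply: (@leq_trans (\sum_i \sum_(e in F) (tail e \in W i))).
  apply: leq_sum => i _; rewrite -sum1_card [in X in X <= _]big_mkcond.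
  rewrite [in X in _ <= X]big_mkcond /=; apply: leq_sum => e _.
  by case: ifP => // eP; rewrite (subsetP (sPF i) _ eP) tW.
rewrite exchange_big /= -sum_nat_const; apply: leq_sum => e _.
apply: leq_trans (mW (tail e)); rewrite -sum1_card [in X in _ <= X]big_mkcond /=.
by apply: leq_sum => i _; rewrite inE; case: (_ \in _).
Qed.

Section DensityArithmetic.
Local Open Scope ring_scope.
Variable R : rcfType.
Implicit Types (x y o c kk h : R).

Lemma sqrt_le_of_le_sqr c kk : 0 <= c -> kk <= c * c -> Num.sqrt kk <= c.
Proof. by move=> c0 kc; rewrite -[c]ger0_norm // -sqrtr_sqr ler_sqrt ?sqr_ge0 ?expr2. Qed.

Lemma lt_sqrt_of_sqr_lt c kk : 0 <= c -> c * c < kk -> c < Num.sqrt kk.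
Proof.
move=> c0 ck; rewrite -[c]ger0_norm // -sqrtr_sqr ltr_sqrt ?expr2 //.
exact: le_lt_trans (mulr_ge0 c0 c0) ck.
Qed.

Lemma density_le_hub x y o c kk : 0 <= x -> x <= o -> 1 <= c -> c <= y ->
  0 < kk -> kk <= c * c -> x / y <= o / Num.sqrt kk.
Proof.
move=> x0 xo c1 cy k0 kc; have q0 : 0 < Num.sqrt kk by rewrite sqrtr_gt0.
have qc := sqrt_le_of_le_sqr (le_trans ler01 c1) kc.
apply: ler_pM => //; first by rewrite invr_ge0 (le_trans ler01) // (le_trans c1).
by rewrite lef_pV2 ?posrE ?(lt_le_trans q0) // (le_trans qc).
Qed.

Lemma density_le_walk x y o c kk h : 0 <= x -> x <= h -> 1 <= y -> 0 <= c ->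
  0 <= o -> c * c < kk -> kk * h <= o * c -> x / y <= o / Num.sqrt kk.
Proof.
move=> x0 xh y1 c0 o0 ck hk; have cq := lt_sqrt_of_sqr_lt c0 ck.
have q0 : 0 < Num.sqrt kk := le_lt_trans c0 cq.
have k0 : 0 < kk by rewrite -sqrtr_gt0.
have qq : Num.sqrt kk * Num.sqrt kk = kk by rewrite -expr2 sqr_sqrtr // ltW.
have hq : h * Num.sqrt kk <= o.
  rewrite -(ler_pM2r q0) -mulrA qq mulrC (le_trans hk) //.
  by rewrite ler_wpM2l // ltW.
rewrite ler_pdivlMr // (le_trans _ hq) // ler_wpM2r ?(ltW q0) //.
rewrite ler_pdivrMr ?(lt_le_trans ltr01) // (le_trans xh) //.
by rewrite -{1}[h]mulr1 ler_wpM2l // (le_trans x0).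
Qed.

End DensityArithmetic.

Lemma opt_attained (V : finType) k (s t : 'I_k -> V) (d : 'I_k -> nat) (E : {set V * V}) :
  feasible s t d E ->
  exists F : {set V * V}, [/\ F \subset E, feasible s t d F & #|F| = OPT s t d E].
Proof.
move=> fE; rewrite /OPT; elim/big_ind: _ => [|x y [F1 h1] [F2 h2]|F /andP[sF fF]].
- by exists E.
- by case: (leqP x y) => _; [exists F1 | exists F2].
- by exists F.
Qed.

Local Open Scope ring_scope.

Theorem lemma4p3 (R : rcfType) (V : finType) (E : {set V * V})
    (k : nat) (s t : 'I_k -> V) (d : 'I_k -> nat)
    (hk : (0 < k)%N)
    (hd : forall i, reach E (d i) (s i) (t i)) :
  exists J : junction V,
    [/\ junction_in E J, jD s t d J != set0 &
        (#|jedges J|%:R / #|jD s t d J|%:R : R)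
          <= (OPT s t d E)%:R / Num.sqrt (k%:R)].
Proof.
have [F [sFE fF oF]] := opt_attained (introT forallP hd : feasible s t d E).
have [PW cover] := fin_all_exists (fun i => walk_coverP (forallP fF i)).
pose P i := (PW i).1; pose W i := (PW i).2.
have {}cover : forall i, walk_cover F (d i) (s i) (t i) (P i) (W i) := cover.
pose i0 := Ordinal hk; pose mult v := #|[set i | v \in W i]|.
have [v0 _ v0max] := @arg_maxnP _ (s i0) predT mult isT.
have [i1 _ i1min] := @arg_minnP _ i0 predT (fun i => #|P i|) isT.
have mult_gt0 : (0 < mult v0)%N.
  apply: leq_trans (v0max (s i0) isT); apply/card_gt0P; exists i0.
  by rewrite inE; case: (cover i0).
have count : (k * #|P i1| <= #|F| * mult v0)%N.
  have hsum := sum_card_le_cover (tail := fst)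
    (fun i => let: And5 sP _ _ _ _ := cover i in sP)
    (fun i => let: And5 _ _ _ tW _ := cover i in tW) (fun v => v0max v isT).
  apply: leq_trans hsum; rewrite -{1}(card_ord k) -sum_nat_const.
  by apply: leq_sum => i _; apply: i1min.
case: (leqP k (mult v0 * mult v0)) => hmult.
- (* many walks through v0: root the junction tree of F at v0 *)
  pose J := junction_at d F v0; have multJ := walk_covers_jD v0 cover.
  exists J; split; first exact: junction_in_sub (spt_junction_in _ _ _) sFE.
    by rewrite -card_gt0 (leq_trans mult_gt0) ?subset_leq_card.
  apply: (density_le_hub (c := (mult v0)%:R));
    rewrite ?ler0n ?ler1n ?ltr0n -?natrM ?ler_nat //.
    by rewrite -oF subset_leq_card // jedges_sub // spt_junction_in.
  exact: subset_leq_card multJ.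
- (* few walks through any vertex: the shortest walk is already cheap *)
  pose J := junction_at d (P i1) (s i1); have [sP hP _ _ _] := cover i1.
  have JD : jD s t d J != set0.
    apply/set0Pn; exists i1.
    by apply: (junction_at_connects (a := 0)); rewrite ?reach_refl ?subn0.
  exists J; split=> //.
    exact: junction_in_sub (spt_junction_in _ _ _) (subset_trans sP sFE).
  apply: (density_le_walk (c := (mult v0)%:R) (h := #|P i1|%:R));
    rewrite ?ler0n -?natrM ?ler_nat ?ltr_nat ?ler1n ?card_gt0 -?oF //.
  exact/subset_leq_card/jedges_sub/spt_junction_in.
Qed.
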